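(* Let $\ell>0$, $\varepsilon>0$ and $v_->0$, $u_\pm>0$ be given, and set $v_*:=v_-$. Let $P\in C^2(\mathbb{R}^+)$ and $\nu\in C^1(\mathbb{R}^+)$ satisfy, for all $u>0$, $$P(0)=0,\quad P(+\infty)=+\infty,\quad P'(u)>0,\quad P''(u)>0,\quad \nu(u)>0.$$ Set $f(u):=u\int_0^u \frac{P(z)}{z^2}\,dz$ and assume $$v_*^2\,(u_+-u_-)=u_-\,u_+\,\big(P(u_+)-P(u_-)\big)\qquad\text{and}\qquad \Big(\frac{v_*^3}{2u_+^2}+v_*f'(u_+)\Big)-\Big(\frac{v_*^3}{2u_-^2}+v_*f'(u_-)\Big)\le 0.$$ Consider the initial-boundary value problem $$u_t+v_x=0,\qquad v_t+\Big\{\frac{v^2}{u}+P(u)-\varepsilon\,\nu(u)\Big(\frac{v}{u}\Big)_x\Big\}_x=0,\qquad x\in(-\ell,\ell),\ t\ge0,$$ with $u(\pm\ell,t)=u_\pm$, $v(-\ell,t)=v_-$ for $t\ge0$ and $u(x,0)=u_0(x)$, $v(x,0)=v_0(x)$. Then there exists a unique stationary solution $(\bar u(x),\bar v(x))$ of this problem, i.e. a unique time-independent solution of the boundary value problem $$v_x=0,\qquad \Big\{\frac{v^2}{u}+P(u)-\varepsilon\,\nu(u)\Big(\frac{v}{u}\Big)_x\Big\}_x=0\ \text{ on }(-\ell,\ell),\qquad u(\pm\ell)=u_\pm,\quad v(-\ell)=v_-.$$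
   Context: Here $u$ is the fluid density and $v$ the momentum (for a compressible isentropic fluid with density-dependent viscosity $\nu$). Since $v_x=0$, the second component of a stationary solution is the constant $v_*=v_-$; the second displayed condition is the entropy jump condition $[\![\frac{v^3}{2u^2}+vf'(u)]\!]\le0$ with $v_+=v_-=v_*$, where $[\![g]\!]$ denotes the value at $(u_+,v_* )$ minus the value at $(u_-,v_* )$. *)

From Stdlib Require Import Reals Lra.
From Coquelicot Require Import Coquelicot.
Open Scope R_scope.

(* f'(u) for f(u) := u * int_0^u P(z)/z^2 dz, i.e.
   f'(u) = int_0^u P(z)/z^2 dz + P(u)/u.
   The lower limit 0 may make the integral diverge (e.g. when P'(0) > 0);
   only differences f'(u+) - f'(u-) enter the statement, so we use the
   base point 1 instead of 0 (this changes f' by an additive constant only,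
   and agrees with the paper's value of every difference whenever it is
   defined). *)
Definition fprime (P : R -> R) (u : R) : R :=
  RInt (fun z => P z / z ^ 2) 1 u + P u / u.

Definition flux (eps : R) (P nu : R -> R) (u v : R -> R) (x : R) : R :=
  v x ^ 2 / u x + P (u x) - eps * nu (u x) * Derive (fun y => v y / u y) x.

Definition stationary_solution (l eps : R) (P nu : R -> R)
    (um up vm : R) (u v : R -> R) : Prop :=
  (forall x, -l <= x <= l -> 0 < u x) /\
  (forall x, -l <= x <= l ->
     filterlim u (within (fun y => -l <= y <= l) (locally x)) (locally (u x)) /\
     filterlim v (within (fun y => -l <= y <= l) (locally x)) (locally (v x))) /\
  (forall x, -l < x < l ->
     ex_derive u x /\ ex_derive (Derive u) x /\
     is_derive v x 0 /\
     is_derive (flux eps P nu u v) x 0) /\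
  u (-l) = um /\ u l = up /\ v (-l) = vm.

From Stdlib Require Import Reals Lra Ranalysis5 ClassicalEpsilon.
From Coquelicot Require Import Coquelicot.
Open Scope R_scope.

(* A stationary solution has constant momentum v = v_-, and its flux is then
   G(u) + N(u) u_x with G(w) = v_-^2/w + P(w) and N(w) = eps v_- nu(w)/w^2 > 0, so u solves
   u_x = (C - G(u)) / N(u) for a constant C.  This right-hand side is differentiable, hence
   Lipschitz at each of its zeros, and a Gronwall argument shows that a solution meeting an
   equilibrium is constant.  A nonconstant solution is therefore strictly monotone; if
   u_- < u_+, then C > G on [u_-, u_+] and x + l = T_C(u(x)) with
   T_C(w) = int_{u_-}^w N / (C - G).  The length T_C(u_+) is continuous and strictly
   decreasing in C, tends to 0 as C -> oo, and exceeds every bound as C decreases to max G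
   (near a maximum point C - G is at most linear, so the integral diverges logarithmically).
   Hence exactly one C gives the length 2 l, and u is the inverse of T_C.  The case
   u_- > u_+ follows by the reflection x -> -x, and u_- = u_+ gives the constant solution. *)

(** * Calculus on intervals *)

Lemma MVT_open (f df : R -> R) (a b : R) : a < b ->
  (forall x, a < x < b -> is_derive f x (df x)) ->
  (forall x, a <= x <= b -> continuity_pt f x) ->
  exists c, a < c < b /\ f b - f a = df c * (b - a).
Proof.
  intros Hab Hd Hc.
  assert (pr : forall c, a < c < b -> derivable_pt f c).
  { intros c Hc'. apply ex_derive_Reals_0. exists (df c). now apply Hd. }
  destruct (MVT f id a b pr (fun c _ => derivable_pt_id c) Hab Hc
    (fun c _ => derivable_continuous_pt _ _ (derivable_pt_id c))) as [c [Hc' E]].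
  exists c; split; [exact Hc'|].
  rewrite derive_pt_id in E.
  replace (derive_pt f c (pr c Hc')) with (df c) in E by
    (symmetry; apply derive_pt_eq_0, is_derive_Reals, Hd, Hc').
  unfold id in E; lra.
Qed.

Lemma is_derive_continuity_pt (f : R -> R) (x l : R) : is_derive f x l -> continuity_pt f x.
Proof.
  intros H. apply continuity_pt_filterlim.
  apply (ex_derive_continuous (K := R_AbsRing) (V := R_NormedModule)). now exists l.
Qed.

Lemma ex_derive_continuity_pt (f : R -> R) (x : R) : ex_derive f x -> continuity_pt f x.
Proof. intros [l H]. exact (is_derive_continuity_pt f x l H). Qed.

Lemma is_derive_Ropp (f : R -> R) (x l : R) : is_derive f x l -> is_derive (fun t => - f t) x (- l).
Proof. intros H. exact (is_derive_opp f x l H). Qed.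

Lemma ex_derive_Ropp (f : R -> R) (x : R) : ex_derive f x -> ex_derive (fun t => - f t) x.
Proof. intros [l H]. exists (- l). now apply is_derive_Ropp. Qed.

Lemma strict_incr_of_derive (f df : R -> R) (a b : R) :
  (forall x, a < x < b -> is_derive f x (df x)) -> (forall x, a < x < b -> 0 < df x) ->
  (forall x, a <= x <= b -> continuity_pt f x) ->
  forall x y, a <= x -> x < y -> y <= b -> f x < f y.
Proof.
  intros Hd Hpos Hc x y Hx Hxy Hy.
  destruct (MVT_open f df x y Hxy) as [c [Hc' E]].
  - intros t Ht; apply Hd; lra.
  - intros t Ht; apply Hc; lra.
  - assert (0 < df c) by (apply Hpos; lra). nra.
Qed.

Lemma const_of_derive_zero (f : R -> R) (a b : R) :
  (forall x, a < x < b -> is_derive f x 0) -> (forall x, a <= x <= b -> continuity_pt f x) ->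
  forall x, a <= x <= b -> f x = f a.
Proof.
  intros Hd Hc x Hx. destruct (Req_dec x a) as [->|Hne]; [reflexivity|].
  destruct (MVT_open f (fun _ => 0) a x) as [c [_ E]];
    [lra | intros; apply Hd; lra | intros; apply Hc; lra | lra].
Qed.

Lemma open_const_of_derive_zero (f : R -> R) (a b : R) :
  (forall x, a < x < b -> is_derive f x 0) -> forall x y, a < x < b -> a < y < b -> f x = f y.
Proof.
  intros Hd.
  assert (Hc : forall p q, a < p -> q < b -> forall x, p <= x <= q -> continuity_pt f x).
  { intros p q Hp Hq x Hx. apply (is_derive_continuity_pt f x 0), Hd; lra. }
  assert (Hle : forall x y, a < x -> x <= y -> y < b -> f y = f x).
  { intros x y Hx Hxy Hy. apply (const_of_derive_zero f x y); [intros; apply Hd; lra | |lra].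
    apply Hc; lra. }
  intros x y Hx Hy. destruct (Rle_or_lt x y); [symmetry|]; apply Hle; lra.
Qed.

Lemma neg_of_nonvanishing (g : R -> R) (a b x0 : R) :
  (forall x, a < x < b -> continuity_pt g x) -> (forall x, a < x < b -> g x <> 0) ->
  a < x0 < b -> g x0 < 0 -> forall x, a < x < b -> g x < 0.
Proof.
  intros Hc Hnz Hx0 Hneg x Hx.
  destruct (Rlt_or_le (g x) 0) as [h|h]; [exact h|exfalso].
  assert (Hpos : 0 < g x) by (specialize (Hnz x Hx); lra).
  destruct (Rlt_or_le x0 x) as [Hlt|Hle].
  - destruct (IVT_interv g x0 x) as [z [Hz Ez]]; auto.
    + intros; apply Hc; lra.
    + apply (Hnz z); [lra|exact Ez].
  - assert (x < x0) by (destruct Hle; [assumption|subst; lra]).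
    destruct (IVT_interv (fun t => - g t) x x0) as [z [Hz Ez]]; try lra.
    + intros; apply continuity_pt_opp, Hc; lra.
    + apply (Hnz z); lra.
Qed.

Lemma closed_of_left (D : R -> Prop) (f : R -> R) (x r : R) :
  closed D -> continuity_pt f x -> 0 < r ->
  (forall y, x - r < y < x -> D (f y)) -> D (f x).
Proof.
  intros HD Hc Hr H.
  apply (@closed_filterlim_loc _ _ (at_left x)
    (Proper_StrongProper _ (at_left_proper_filter x)) f D); [| |exact HD].
  - eapply filterlim_filter_le_1; [apply filter_le_within|].
    now apply continuity_pt_filterlim.
  - exists (mkposreal r Hr). intros y Hy Hyx. apply H.
    change (Rabs (y - x) < r) in Hy. apply Rabs_def2 in Hy. lra.
Qed.

Lemma closed_of_right (D : R -> Prop) (f : R -> R) (x r : R) :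
  closed D -> continuity_pt f x -> 0 < r ->
  (forall y, x < y < x + r -> D (f y)) -> D (f x).
Proof.
  intros HD Hc Hr H.
  apply (@closed_filterlim_loc _ _ (at_right x)
    (Proper_StrongProper _ (at_right_proper_filter x)) f D); [| |exact HD].
  - eapply filterlim_filter_le_1; [apply filter_le_within|].
    now apply continuity_pt_filterlim.
  - exists (mkposreal r Hr). intros y Hy Hyx. apply H.
    change (Rabs (y - x) < r) in Hy. apply Rabs_def2 in Hy. lra.
Qed.

Lemma interval_ending_at (a b w0 d : R) : a < b -> a <= w0 <= b -> 0 < d ->
  exists p q, a <= p < q /\ q <= b /\ (p = w0 \/ q = w0) /\ q - p < d.
Proof.
  intros Hab Hw0 Hd. destruct (Rlt_or_le w0 b).
  - exists w0, (w0 + Rmin (d / 2) (b - w0)).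
    pose proof (Rmin_l (d / 2) (b - w0)). pose proof (Rmin_r (d / 2) (b - w0)).
    assert (0 < Rmin (d / 2) (b - w0)) by (apply Rmin_glb_lt; lra). lra.
  - exists (b - Rmin (d / 2) (b - a)), b.
    pose proof (Rmin_l (d / 2) (b - a)). pose proof (Rmin_r (d / 2) (b - a)).
    assert (0 < Rmin (d / 2) (b - a)) by (apply Rmin_glb_lt; lra). lra.
Qed.

Lemma is_RInt_inv_affine (c al be p q : R) : al <> 0 ->
  (forall y, Rmin p q <= y <= Rmax p q -> 0 < al * y + be) ->
  is_RInt (fun y => c / (al * y + be)) p q (c * (ln (al * q + be) - ln (al * p + be)) / al).
Proof.
  intros Hal Hpos.
  replace (c * (ln (al * q + be) - ln (al * p + be)) / al) with
    (minus (c * ln (al * q + be) / al) (c * ln (al * p + be) / al))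
    by (unfold minus, plus, opp; simpl; field; exact Hal).
  apply (is_RInt_derive (fun y => c * ln (al * y + be) / al)).
  - intros y Hy. specialize (Hpos y Hy). auto_derive; [lra|field; split; lra].
  - intros y Hy. specialize (Hpos y Hy).
    apply continuity_pt_filterlim, continuity_pt_div; [reg|reg|lra].
Qed.

Lemma increasing_inverse (f : R -> R) :
  (forall x, continuity_pt f x) -> (forall x y, x < y -> f x < f y) ->
  (forall y, exists x, f x = y) ->
  exists g : R -> R, (forall y, f (g y) = y) /\ (forall y1 y2, y1 < y2 -> g y1 < g y2) /\
    (forall y, continuity_pt g y).
Proof.
  intros Hc Hincr Hsurj.
  set (g := fun y => epsilon (inhabits 0) (fun x => f x = y)).
  assert (Hfg : forall y, f (g y) = y) by (intros y; apply epsilon_spec, Hsurj).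
  assert (Hmono : forall y1 y2, y1 < y2 -> g y1 < g y2).
  { intros y1 y2 H. destruct (Rlt_or_le (g y1) (g y2)) as [|[Hlt|Heq]]; [assumption| |].
    - apply Hincr in Hlt. rewrite !Hfg in Hlt. lra.
    - apply (f_equal f) in Heq. rewrite !Hfg in Heq. lra. }
  exists g. split; [exact Hfg|split; [exact Hmono|]]. intros y.
  assert (Hbetween : forall z, f (g y - 1) <= z -> z <= f (g y + 1) -> g y - 1 <= g z <= g y + 1).
  { intros z H1 H2. split.
    - destruct (Rle_or_lt (g y - 1) (g z)) as [|Hlt]; [assumption|].
      apply Hincr in Hlt. rewrite Hfg in Hlt. lra.
    - destruct (Rle_or_lt (g z) (g y + 1)) as [|Hlt]; [assumption|].
      apply Hincr in Hlt. rewrite Hfg in Hlt. lra. }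
  apply (continuity_pt_recip_interv f g (g y - 1) (g y + 1)); [lra| | |exact Hbetween| |].
  - intros x1 x2 _ H _. now apply Hincr.
  - intros z _ _. apply Hfg.
  - intros x _. apply Hc.
  - rewrite <- (Hfg y) at 2 3. split; apply Hincr; lra.
Qed.

Lemma is_derive_inverse (f g df : R -> R) (y r : R) : 0 < r ->
  (forall z, f (g z) = z) -> continuity_pt g y -> g (y - r) <= g y <= g (y + r) ->
  (forall x, g (y - r) <= x <= g (y + r) -> is_derive f x (df x)) -> df (g y) <> 0 ->
  is_derive g y (/ df (g y)).
Proof.
  intros Hr Hfg Hgc Hmono Hd Hnz.
  assert (Prf : forall x, g (y - r) <= x <= g (y + r) -> derivable_pt f x).
  { intros x Hx. apply ex_derive_Reals_0. exists (df x). now apply Hd. }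
  assert (Hder : derive_pt f (g y) (Prf (g y) Hmono) = df (g y))
    by (apply derive_pt_eq_0, is_derive_Reals, Hd, Hmono).
  apply is_derive_Reals. replace (/ df (g y)) with (1 / derive_pt f (g y) (Prf (g y) Hmono))
    by (rewrite Hder; unfold Rdiv; ring).
  apply (derivable_pt_lim_recip_interv f g (y - r) (y + r) y Prf Hgc); [lra|lra| |].
  - intros z _. apply Hfg.
  - now rewrite Hder.
Qed.

(** * Equilibria of scalar ODEs *)

Lemma root_lipschitz (F : R -> R) (w : R) : ex_derive F w -> F w = 0 ->
  exists L d, 0 < d /\ forall y, Rabs (y - w) < d -> Rabs (F y) <= L * Rabs (y - w).
Proof.
  intros [D HD] H0. apply is_derive_Reals in HD.
  destruct (HD 1 Rlt_0_1) as [d Hd].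
  exists (Rabs D + 1), d. split; [apply cond_pos|].
  intros y Hy. destruct (Req_dec y w) as [->|Hne].
  - rewrite H0, Rminus_diag, !Rabs_R0. lra.
  - specialize (Hd (y - w) ltac:(lra) Hy).
    replace (w + (y - w)) with y in Hd by ring. rewrite H0, Rminus_0_r in Hd.
    replace (F y) with ((F y / (y - w) - D) * (y - w) + D * (y - w)) by (field; lra).
    eapply Rle_trans; [apply Rabs_triang|]. rewrite !Rabs_mult.
    pose proof (Rabs_pos (y - w)). nra.
Qed.

Lemma is_derive_reflect (u : R -> R) (x d : R) :
  is_derive u (- x) d -> is_derive (fun t => u (- t)) x (- d).
Proof.
  intros H.
  assert (Hopp : is_derive (fun t : R => - t) x (-1)) by (auto_derive; auto; ring).
  replace (- d) with (scal (-1) d) by (unfold scal; simpl; unfold mult; simpl; ring).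
  exact (is_derive_comp u (fun t => - t) x d (-1) H Hopp).
Qed.

Lemma is_derive_gronwall_weight (F u : R -> R) (w L t : R) : is_derive u t (F (u t)) ->
  is_derive (fun s => (u s - w) ^ 2 * exp (-2 * L * s)) t
    (2 * ((u t - w) * F (u t) - L * (u t - w) ^ 2) * exp (-2 * L * t)).
Proof.
  intros Hu.
  assert (Hdiff : is_derive (fun s => u s - w) t (F (u t))).
  { apply (is_derive_ext (fun s => minus (u s) w)); [reflexivity|].
    replace (F (u t)) with (minus (F (u t)) 0) by (unfold minus, plus, opp; simpl; ring).
    apply (is_derive_minus (K := R_AbsRing) (V := R_NormedModule)); [exact Hu|].
    apply (is_derive_const (K := R_AbsRing) (V := R_NormedModule)). }
  assert (Hexp : is_derive (fun s => exp (-2 * L * s)) t (-2 * L * exp (-2 * L * t)))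
    by (auto_derive; auto; ring).
  replace (2 * ((u t - w) * F (u t) - L * (u t - w) ^ 2) * exp (-2 * L * t)) with
    (plus (mult (INR 2 * F (u t) * (u t - w) ^ 1) (exp (-2 * L * t)))
          (mult ((u t - w) ^ 2) (-2 * L * exp (-2 * L * t))))
    by (unfold plus, mult; simpl; ring).
  exact (is_derive_mult _ _ t _ _ (is_derive_pow _ 2 t _ Hdiff) Hexp Rmult_comm).
Qed.

Lemma ode_root_persists (F u : R -> R) (w L d p q s : R) : 0 < d ->
  (forall y, Rabs (y - w) < d -> Rabs (F y) <= L * Rabs (y - w)) ->
  (forall x, p <= x <= q -> continuity_pt u x) ->
  (forall x, p < x < q -> is_derive u x (F (u x))) ->
  p <= s < q -> u s = w -> exists r, 0 < r <= q - s /\ forall t, s < t < s + r -> u t = w.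
Proof.
  intros Hd HF Hc Hu Hs Hw.
  destruct (proj1 (continuity_pt_locally u s) (Hc s ltac:(lra)) (mkposreal d Hd)) as [r0 Hr0].
  set (r := Rmin r0 (q - s)).
  assert (Hr1 : 0 < r) by (apply Rmin_glb_lt; [apply cond_pos|lra]).
  assert (Hr2 : r <= r0) by apply Rmin_l.
  assert (Hr3 : r <= q - s) by apply Rmin_r.
  exists r. split; [lra|]. intros t Ht.
  (* while u stays within d of w, the weight (u - w)^2 e^{-2Lt} cannot grow from its value 0 *)
  destruct (MVT_open (fun t => (u t - w) ^ 2 * exp (-2 * L * t))
    (fun t => 2 * ((u t - w) * F (u t) - L * (u t - w) ^ 2) * exp (-2 * L * t)) s t)
    as [c [Hc' E]]; [lra|intros y Hy; apply is_derive_gronwall_weight, Hu; lra| |].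
  { intros y Hy.
    apply (continuity_pt_mult (fun t => (u t - w) ^ 2) (fun t => exp (-2 * L * t))).
    - apply (continuity_pt_comp u (fun v => (v - w) ^ 2)); [apply Hc; lra|reg].
    - apply (continuity_pt_comp (fun t => -2 * L * t) exp); reg. }
  assert (Hnear : Rabs (u c - w) < d).
  { rewrite <- Hw. apply (Hr0 c). change (Rabs (c - s) < r0). rewrite Rabs_right; lra. }
  assert (Hslope : (u c - w) * F (u c) <= L * (u c - w) ^ 2).
  { pose proof (HF _ Hnear). pose proof (Rabs_pos (u c - w)).
    pose proof (Rle_abs ((u c - w) * F (u c))). rewrite Rabs_mult in *.
    rewrite <- (pow2_abs (u c - w)). nra. }
  assert (Hdecay : 0 <= - ((u c - w) * F (u c) - L * (u c - w) ^ 2) * exp (-2 * L * c) * (t - s)).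
  { apply Rmult_le_pos; [apply Rmult_le_pos; [lra|left; apply exp_pos]|lra]. }
  rewrite Hw, Rminus_diag in E.
  assert ((u t - w) ^ 2 * exp (-2 * L * t) <= 0) by nra.
  pose proof (exp_pos (-2 * L * t)). pose proof (pow2_ge_0 (u t - w)).
  assert ((u t - w) ^ 2 = 0) by nra. nra.
Qed.

Lemma ode_stays_at_root (F u : R -> R) (w L d p q : R) : 0 < d ->
  (forall y, Rabs (y - w) < d -> Rabs (F y) <= L * Rabs (y - w)) ->
  (forall x, p <= x <= q -> continuity_pt u x) ->
  (forall x, p < x < q -> is_derive u x (F (u x))) ->
  u p = w -> forall x, p <= x <= q -> u x = w.
Proof.
  intros Hd HF Hc Hu Hp x Hx.
  set (S := fun s => p <= s <= q /\ forall t, p <= t <= s -> u t = w).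
  assert (HSp : S p) by (split; [lra|]; intros t Ht; replace t with p by lra; exact Hp).
  destruct (completeness S) as [s [Hub Hlub]]; [exists q; intros y [Hy _]; lra|now exists p|].
  assert (Hps : p <= s) by now apply Hub.
  assert (Hsq : s <= q) by (apply Hlub; intros y [Hy _]; lra).
  assert (Hbelow : forall t, p <= t < s -> u t = w).
  { intros t Ht. destruct (classic (exists y, S y /\ t < y)) as [[y [[_ Hy] Hty]]|Hn].
    - apply Hy; lra.
    - exfalso. assert (s <= t); [|lra]. apply Hlub. intros y Hy.
      destruct (Rle_or_lt y t); [assumption|]. exfalso; apply Hn; now exists y. }
  assert (Hs : u s = w).
  { destruct (Req_dec s p) as [->|Hne]; [exact Hp|].
    apply (closed_of_left (fun z => z = w) u s (s - p)); [apply closed_eq|apply Hc; lra|lra|].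
    intros y Hy; apply Hbelow; lra. }
  assert (Hsq' : s = q).
  { destruct (Req_dec s q) as [E|Hne]; [exact E|exfalso].
    destruct (ode_root_persists F u w L d p q s Hd HF Hc Hu ltac:(lra) Hs) as [r [Hr Hafter]].
    assert (HS : S (s + r / 2)).
    { split; [lra|]. intros t Ht.
      destruct (Rlt_or_le t s); [apply Hbelow; lra|].
      destruct (Req_dec t s) as [->|]; [exact Hs|apply Hafter; lra]. }
    specialize (Hub _ HS). lra. }
  destruct (Req_dec x s) as [->|]; [exact Hs|apply Hbelow; lra].
Qed.

Lemma ode_root_const (F u : R -> R) (w L d p q x0 : R) : 0 < d ->
  (forall y, Rabs (y - w) < d -> Rabs (F y) <= L * Rabs (y - w)) ->
  (forall x, p <= x <= q -> continuity_pt u x) ->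
  (forall x, p < x < q -> is_derive u x (F (u x))) ->
  p <= x0 <= q -> u x0 = w -> forall x, p <= x <= q -> u x = w.
Proof.
  intros Hd HF Hc Hu Hx0 Hw x Hx.
  destruct (Rle_or_lt x0 x).
  - apply (ode_stays_at_root F u w L d x0 q); auto; [intros; apply Hc|intros; apply Hu|]; lra.
  - replace x with (- - x) by ring.
    apply (ode_stays_at_root (fun y => - F y) (fun t => u (- t)) w L d (- x0) (- p));
      [exact Hd| | | |rewrite Ropp_involutive; exact Hw|lra].
    + intros y Hy. rewrite Rabs_Ropp. now apply HF.
    + intros t Ht. apply (continuity_pt_comp (fun t => - t) u); [reg|apply Hc; lra].
    + intros t Ht. apply is_derive_reflect, Hu. lra.
Qed.

(** * Clamping to a segment *)

Definition clamp (a b x : R) : R := Rmax a (Rmin b x).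

Lemma clamp_cases (a b x : R) : a <= b ->
  (x <= a /\ clamp a b x = a) \/ (a <= x <= b /\ clamp a b x = x) \/ (b <= x /\ clamp a b x = b).
Proof.
  intros Hab. unfold clamp, Rmax, Rmin.
  destruct (Rle_dec b x), (Rle_dec a b), (Rle_dec a x); lra.
Qed.

Lemma clamp_id (a b x : R) : a <= x <= b -> clamp a b x = x.
Proof. intros Hx. destruct (clamp_cases a b x) as [[? ->]|[[? ->]|[? ->]]]; lra. Qed.

Lemma clamp_below (a b x : R) : a <= b -> x <= a -> clamp a b x = a.
Proof. intros Hab Hx. destruct (clamp_cases a b x Hab) as [[? ->]|[[? ->]|[? ->]]]; lra. Qed.

Lemma clamp_above (a b x : R) : a <= b -> b <= x -> clamp a b x = b.
Proof. intros Hab Hx. destruct (clamp_cases a b x Hab) as [[? ->]|[[? ->]|[? ->]]]; lra. Qed.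

Lemma clamp_in (a b x : R) : a <= b -> a <= clamp a b x <= b.
Proof. intros Hab. destruct (clamp_cases a b x Hab) as [[? ->]|[[? ->]|[? ->]]]; lra. Qed.

Lemma clamp_mono (a b x y : R) : a <= b -> x <= y ->
  clamp a b x <= clamp a b y /\ x - clamp a b x <= y - clamp a b y.
Proof.
  intros Hab Hxy.
  destruct (clamp_cases a b x Hab) as [[? ->]|[[? ->]|[? ->]]];
  destruct (clamp_cases a b y Hab) as [[? ->]|[[? ->]|[? ->]]]; lra.
Qed.

Lemma continuity_pt_clamp (a b x : R) : a <= b -> continuity_pt (clamp a b) x.
Proof.
  intros Hab. apply continuity_pt_locally. intros e. exists e. intros y Hy.
  change (Rabs (y - x) < e) in Hy.
  assert (Hlip : Rabs (clamp a b y - clamp a b x) <= Rabs (y - x)).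
  { destruct (Rle_or_lt x y) as [H|H];
      [destruct (clamp_mono a b x y Hab H)|destruct (clamp_mono a b y x Hab ltac:(lra))];
      unfold Rabs; destruct Rcase_abs, Rcase_abs; lra. }
  lra.
Qed.

Definition seg_continuous (l : R) (f : R -> R) : Prop :=
  forall x, -l <= x <= l ->
    filterlim f (within (fun y => -l <= y <= l) (locally x)) (locally (f x)).

Lemma seg_continuous_clamp (l : R) (f : R -> R) (x : R) : 0 <= l -> seg_continuous l f ->
  continuity_pt (fun t => f (clamp (-l) l t)) x.
Proof.
  intros Hl Hf. apply continuity_pt_filterlim.
  assert (Hin := clamp_in (-l) l x ltac:(lra)).
  eapply filterlim_comp; [|apply (Hf _ Hin)].
  intros P HP.
  pose proof (proj1 (continuity_pt_filterlim _ _) (continuity_pt_clamp (-l) l x ltac:(lra)) _ HP)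
    as HC.
  revert HC. apply (filter_imp (F := locally x)). intros t Ht. apply Ht, clamp_in. lra.
Qed.

Lemma seg_continuous_of_continuity_pt (l : R) (f : R -> R) :
  (forall x, -l <= x <= l -> continuity_pt f x) -> seg_continuous l f.
Proof.
  intros Hf x Hx. eapply filterlim_filter_le_1; [apply filter_le_within|].
  now apply continuity_pt_filterlim, Hf.
Qed.

(** * The profile equation N(u) u' = C - G(u) *)

Section Profile.

Variables G N : R -> R.
Hypothesis G_derive : forall w, 0 < w -> ex_derive G w.
Hypothesis N_derive : forall w, 0 < w -> ex_derive N w.
Hypothesis N_pos : forall w, 0 < w -> 0 < N w.

Lemma G_continuity_pt (w : R) : 0 < w -> continuity_pt G w.
Proof. intros Hw. now apply ex_derive_continuity_pt, G_derive. Qed.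

Definition rhs (C w : R) : R := (C - G w) / N w.

(* Continuity is required on all of R; a solution that is only continuous on [-l, l] is
   first extended by clamping (see stationary_profile). *)
Definition profile (l C : R) (u : R -> R) : Prop :=
  (forall x, -l <= x <= l -> 0 < u x) /\ (forall x, continuity_pt u x) /\
  (forall x, -l < x < l -> is_derive u x (rhs C (u x))).

Lemma ex_derive_rhs (C w : R) : 0 < w -> ex_derive (rhs C) w.
Proof.
  intros Hw. specialize (N_pos w Hw). unfold rhs.
  apply (ex_derive_div (fun w => C - G w) N); [|now apply N_derive|lra].
  apply (ex_derive_minus (K := R_AbsRing) (V := R_NormedModule) (fun _ => C) G);
    [apply (ex_derive_const (K := R_AbsRing) (V := R_NormedModule))|now apply G_derive].
Qed.

Lemma rhs_pos (C w : R) : 0 < w -> (0 < rhs C w <-> G w < C).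
Proof.
  intros Hw. specialize (N_pos w Hw). unfold rhs. split; intros H.
  - assert (0 < (C - G w) / N w * N w) by (apply Rmult_lt_0_compat; lra).
    field_simplify in H0; lra.
  - apply Rdiv_lt_0_compat; lra.
Qed.

Lemma rhs_balance (C w : R) : 0 < w -> G w + N w * rhs C w = C.
Proof. intros Hw. specialize (N_pos w Hw). unfold rhs. field. lra. Qed.

Lemma profile_const_of_root (l C : R) (u : R -> R) (x0 : R) : profile l C u ->
  -l <= x0 <= l -> rhs C (u x0) = 0 -> forall x, -l <= x <= l -> u x = u x0.
Proof.
  intros [Hp [Hc Hd]] Hx0 H0.
  destruct (root_lipschitz (rhs C) (u x0) (ex_derive_rhs C _ (Hp x0 Hx0)) H0)
    as [L [d [Hdpos HL]]].
  apply (ode_root_const (rhs C) u (u x0) L d (-l) l x0); auto.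
Qed.

Lemma profile_incr_or_const (l C : R) (u : R -> R) : profile l C u -> u (-l) <= u l ->
  (forall x, -l <= x <= l -> u x = u (-l)) \/ (forall x, -l < x < l -> 0 < rhs C (u x)).
Proof.
  intros Hu Hle. pose proof Hu as [Hp [Hc Hd]].
  destruct (classic (exists x0, -l < x0 < l /\ rhs C (u x0) = 0)) as [[x0 [Hx0 H0]]|Hnz].
  - left. intros x Hx. rewrite (profile_const_of_root l C u x0 Hu ltac:(lra) H0 x Hx).
    symmetry; apply (profile_const_of_root l C u x0 Hu ltac:(lra) H0); lra.
  - right. intros x Hx.
    destruct (Rlt_or_le 0 (rhs C (u x))) as [Hpos|Hnpos]; [exact Hpos|exfalso].
    assert (Hneg : forall y, -l < y < l -> rhs C (u y) < 0).
    { apply (neg_of_nonvanishing _ (-l) l x); [| |exact Hx|].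
      - intros y Hy. apply (continuity_pt_comp u (rhs C)); [apply Hc|].
        apply ex_derive_continuity_pt, ex_derive_rhs, Hp. lra.
      - intros y Hy H0. apply Hnz. now exists y.
      - destruct Hnpos as [|E]; [assumption|]. exfalso; apply Hnz. now exists x. }
    assert (- u (-l) < - u l); [|lra].
    apply (strict_incr_of_derive (fun t => - u t) (fun t => - rhs C (u t)) (-l) l); try lra.
    + intros y Hy. apply is_derive_Ropp, Hd, Hy.
    + intros y Hy. specialize (Hneg y Hy). lra.
    + intros y Hy. apply continuity_pt_opp, Hc.
Qed.

Lemma profile_flat (l C : R) (u : R -> R) : 0 < l -> profile l C u -> u (-l) = u l ->
  forall x, -l <= x <= l -> u x = u (-l).
Proof.
  intros Hl Hu E. destruct (profile_incr_or_const l C u Hu ltac:(lra)) as [H|Hpos]; [exact H|].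
  destruct Hu as [_ [Hc Hd]].
  assert (u (-l) < u l); [|lra].
  apply (strict_incr_of_derive u (fun t => rhs C (u t)) (-l) l); auto; lra.
Qed.

Definition dxdu (C w : R) : R := N w / (C - G w).

Definition travel (a C w : R) : R := RInt (dxdu C) a w.

Definition admissible (a b C : R) : Prop := forall w, a <= w <= b -> G w < C.

Lemma dxdu_pos (C w : R) : 0 < w -> G w < C -> 0 < dxdu C w.
Proof. intros Hw HC. specialize (N_pos w Hw). apply Rdiv_lt_0_compat; lra. Qed.

Lemma dxdu_continuous (C w : R) : 0 < w -> G w < C -> continuous (dxdu C) w.
Proof.
  intros Hw HC. apply continuity_pt_filterlim. unfold dxdu.
  apply continuity_pt_div; [| |lra].
  - now apply ex_derive_continuity_pt, N_derive.
  - apply continuity_pt_minus; [apply continuity_pt_const; intros ? ?; reflexivity|].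
    now apply G_continuity_pt.
Qed.

Lemma dxdu_rhs (C w : R) : 0 < w -> G w < C -> dxdu C w * rhs C w = 1.
Proof. intros Hw HC. specialize (N_pos w Hw). unfold dxdu, rhs. field. lra. Qed.

Lemma admissible_widen (a b C : R) : 0 < a -> a <= b -> admissible a b C ->
  exists e, 0 < e < a /\ admissible (a - e) (b + e) C.
Proof.
  intros Ha Hab Hadm.
  assert (Hnear : forall c, a <= c <= b ->
    exists r, 0 < r /\ forall y, Rabs (y - c) < r -> G y < C).
  { intros c Hc.
    destruct (proj1 (continuity_pt_locally G c) (G_continuity_pt c ltac:(lra))
      (mkposreal _ (proj2 (Rlt_0_minus _ _) (Hadm c Hc)))) as [r Hr].
    exists r; split; [apply cond_pos|]. intros y Hy.
    specialize (Hr y Hy). simpl in Hr. apply Rabs_def2 in Hr. lra. }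
  destruct (Hnear a) as [ra [Hra Hna]]; [lra|].
  destruct (Hnear b) as [rb [Hrb Hnb]]; [lra|].
  set (e := Rmin (a / 2) (Rmin ra rb) / 2).
  assert (He1 : Rmin (a / 2) (Rmin ra rb) <= a / 2) by apply Rmin_l.
  assert (He2 : Rmin (a / 2) (Rmin ra rb) <= Rmin ra rb) by apply Rmin_r.
  assert (He3 : Rmin ra rb <= ra) by apply Rmin_l.
  assert (He4 : Rmin ra rb <= rb) by apply Rmin_r.
  assert (He5 : 0 < Rmin (a / 2) (Rmin ra rb)) by (repeat apply Rmin_glb_lt; lra).
  exists e. split; [unfold e; lra|]. intros w Hw.
  destruct (Rlt_or_le w a); [apply Hna; rewrite Rabs_left; unfold e in *; lra|].
  destruct (Rle_or_lt w b); [apply Hadm; lra|].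
  apply Hnb. rewrite Rabs_right; unfold e in *; lra.
Qed.

Lemma ex_RInt_dxdu (a b C p q : R) : 0 < a -> admissible a b C ->
  a <= p <= b -> a <= q <= b -> ex_RInt (dxdu C) p q.
Proof.
  intros Ha Hadm Hp Hq. apply (ex_RInt_continuous (V := R_CompleteNormedModule)).
  intros z Hz.
  assert (a <= Rmin p q) by (apply Rmin_glb; lra).
  assert (Rmax p q <= b) by (apply Rmax_lub; lra).
  apply dxdu_continuous; [lra|apply Hadm; lra].
Qed.

Lemma is_derive_travel (a b C w : R) : 0 < a -> a <= b -> admissible a b C ->
  a <= w <= b -> is_derive (travel a C) w (dxdu C w).
Proof.
  intros Ha Hab Hadm Hw.
  destruct (admissible_widen a b C Ha Hab Hadm) as [e [He Hadm']].
  apply (is_derive_RInt (V := R_CompleteNormedModule) (dxdu C) (travel a C) a w).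
  - apply (locally_interval _ w (a - e) (b + e)); simpl; [lra|lra|].
    intros y Hy1 Hy2. apply RInt_correct, (ex_RInt_dxdu (a - e) (b + e)); auto; lra.
  - apply dxdu_continuous; [lra|apply Hadm; lra].
Qed.

Lemma travel_continuity_pt (a b C w : R) : 0 < a -> a <= b -> admissible a b C ->
  a <= w <= b -> continuity_pt (travel a C) w.
Proof.
  intros Ha Hab Hadm Hw. apply (is_derive_continuity_pt _ _ (dxdu C w)).
  now apply (is_derive_travel a b).
Qed.

Lemma travel_base (a C : R) : travel a C a = 0.
Proof. apply (RInt_point (V := R_CompleteNormedModule)). Qed.

Lemma travel_strict_incr (a b C p q : R) : 0 < a -> admissible a b C ->
  a <= p -> p < q -> q <= b -> travel a C p < travel a C q.
Proof.
  intros Ha Hadm Hp Hpq Hq.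
  apply (strict_incr_of_derive (travel a C) (dxdu C) a b); try lra.
  - intros x Hx. apply (is_derive_travel a b); auto; lra.
  - intros x Hx. apply dxdu_pos; [lra|apply Hadm; lra].
  - intros x Hx. apply (travel_continuity_pt a b); auto; lra.
Qed.

Lemma travel_decr_C (a b C1 C2 : R) : 0 < a -> a < b -> admissible a b C1 -> C1 < C2 ->
  travel a C2 b < travel a C1 b.
Proof.
  intros Ha Hab Hadm H12.
  assert (Hadm2 : admissible a b C2) by (intros w Hw; specialize (Hadm w Hw); lra).
  apply RInt_lt; [exact Hab| | |].
  - intros x Hx. apply dxdu_continuous; [lra|apply Hadm; lra].
  - intros x Hx. apply dxdu_continuous; [lra|apply Hadm2; lra].
  - intros x Hx. specialize (Hadm x ltac:(lra)). specialize (N_pos x ltac:(lra)).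
    unfold dxdu, Rdiv. apply Rmult_lt_compat_l; [lra|].
    apply Rinv_lt_contravar; nra.
Qed.

Lemma travel_upper (a b C M K : R) : 0 < a -> a <= b ->
  (forall w, a <= w <= b -> G w <= M) -> (forall w, a <= w <= b -> N w <= K) -> M < C ->
  travel a C b <= (b - a) * (K / (C - M)).
Proof.
  intros Ha Hab HM HK HC.
  assert (Hadm : admissible a b C) by (intros w Hw; specialize (HM w Hw); lra).
  apply Rle_trans with (RInt (fun _ => K / (C - M)) a b).
  - apply RInt_le; [exact Hab|apply (ex_RInt_dxdu a b); auto; lra|apply ex_RInt_const|].
    intros w Hw. specialize (HM w ltac:(lra)). specialize (HK w ltac:(lra)).
    specialize (N_pos w ltac:(lra)). unfold dxdu, Rdiv.
    apply Rmult_le_compat; [lra|left; apply Rinv_0_lt_compat; lra|lra|].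
    apply Rinv_le_contravar; lra.
  - rewrite RInt_const. apply Rle_refl.
Qed.

Lemma travel_lipschitz_C (a b M K D C1 C2 : R) : 0 < a -> a <= b ->
  (forall w, a <= w <= b -> G w <= M) -> (forall w, a <= w <= b -> N w <= K) ->
  0 < D -> M + D <= C1 -> M + D <= C2 ->
  Rabs (travel a C2 b - travel a C1 b) <= (b - a) * (K / D ^ 2 * Rabs (C2 - C1)).
Proof.
  intros Ha Hab HM HK HD H1 H2.
  assert (Hadm1 : admissible a b C1) by (intros w Hw; specialize (HM w Hw); lra).
  assert (Hadm2 : admissible a b C2) by (intros w Hw; specialize (HM w Hw); lra).
  assert (Hex1 := ex_RInt_dxdu a b C1 a b Ha Hadm1 ltac:(lra) ltac:(lra)).
  assert (Hex2 := ex_RInt_dxdu a b C2 a b Ha Hadm2 ltac:(lra) ltac:(lra)).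
  unfold travel. rewrite <- (RInt_minus (V := R_CompleteNormedModule)) by assumption.
  apply abs_RInt_le_const; [exact Hab|now apply (ex_RInt_minus (V := R_CompleteNormedModule))|].
  intros w Hw. specialize (HM w Hw). specialize (HK w Hw). specialize (N_pos w ltac:(lra)).
  unfold minus, plus, opp, dxdu; simpl.
  replace (N w / (C2 - G w) + - (N w / (C1 - G w)))
    with (N w * (C1 - C2) * / ((C2 - G w) * (C1 - G w))) by (field; lra).
  assert (Hprod : D ^ 2 <= (C2 - G w) * (C1 - G w)) by nra.
  assert (Hinv : / ((C2 - G w) * (C1 - G w)) <= / D ^ 2) by (apply Rinv_le_contravar; nra).
  assert (0 < / ((C2 - G w) * (C1 - G w))) by (apply Rinv_0_lt_compat; nra).
  rewrite !Rabs_mult, (Rabs_right (N w)), (Rabs_right (/ _)), (Rabs_minus_sym C1) by lra.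
  pose proof (Rabs_pos (C2 - C1)).
  apply Rle_trans with (K * Rabs (C2 - C1) * / D ^ 2); [|right; field; lra].
  apply Rmult_le_compat; [nra|lra|apply Rmult_le_compat_r; lra|exact Hinv].
Qed.

Lemma travel_continuity_C (a b M K C : R) : 0 < a -> a <= b ->
  (forall w, a <= w <= b -> G w <= M) -> (forall w, a <= w <= b -> N w <= K) -> M < C ->
  continuity_pt (fun C' => travel a C' b) C.
Proof.
  intros Ha Hab HM HK HC. apply continuity_pt_locally. intros e.
  set (D := (C - M) / 2). set (Lip := (b - a) * (K / D ^ 2)).
  assert (HD : 0 < D) by (unfold D; lra).
  assert (HLip : 0 <= Lip).
  { pose proof (N_pos a Ha). pose proof (HK a ltac:(lra)).
    apply Rmult_le_pos; [lra|]. apply Rlt_le, Rdiv_lt_0_compat; [lra|nra]. }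
  assert (Hr : 0 < Rmin D (e / (Lip + 1))).
  { apply Rmin_glb_lt; [lra|]. apply Rdiv_lt_0_compat; [apply cond_pos|lra]. }
  exists (mkposreal _ Hr). intros C' HC'. change (Rabs (C' - C) < Rmin D (e / (Lip + 1))) in HC'.
  assert (Hr1 := Rmin_l D (e / (Lip + 1))). assert (Hr2 := Rmin_r D (e / (Lip + 1))).
  assert (HC'D : M + D <= C') by (apply Rabs_def2 in HC'; unfold D in *; lra).
  eapply Rle_lt_trans; [apply (travel_lipschitz_C a b M K D C C'); auto; unfold D; lra|].
  fold Lip. rewrite <- Rmult_assoc. fold Lip.
  assert (Lip * Rabs (C' - C) <= Lip * (e / (Lip + 1))) by (apply Rmult_le_compat_l; lra).
  replace (Lip * (e / (Lip + 1))) with (e - e / (Lip + 1)) in * by (field; lra).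
  assert (0 < e / (Lip + 1)) by (apply Rdiv_lt_0_compat; [apply cond_pos|lra]). lra.
Qed.

Lemma travel_ge_RInt (a b C p q : R) : 0 < a -> admissible a b C ->
  a <= p <= q -> q <= b -> RInt (dxdu C) p q <= travel a C b.
Proof.
  intros Ha Hadm Hpq Hqb.
  assert (Hle : forall x y, a <= x <= y -> y <= b -> travel a C x <= travel a C y).
  { intros x y Hxy Hy. destruct (Req_dec x y) as [->|Hne]; [lra|].
    left; apply (travel_strict_incr a b); auto; lra. }
  assert (E : RInt (dxdu C) p q = travel a C q - travel a C p).
  { unfold travel.
    assert (HC := RInt_Chasles (V := R_CompleteNormedModule) (dxdu C) a p q
      (ex_RInt_dxdu a b C a p Ha Hadm ltac:(lra) ltac:(lra))
      (ex_RInt_dxdu a b C p q Ha Hadm ltac:(lra) ltac:(lra))).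
    change (RInt (dxdu C) a p + RInt (dxdu C) p q = RInt (dxdu C) a q) in HC. lra. }
  rewrite E. pose proof (travel_base a C). pose proof (Hle a p ltac:(lra) ltac:(lra)).
  pose proof (Hle q b ltac:(lra) ltac:(lra)). lra.
Qed.

Lemma travel_ge_log (a b w0 p q K L del : R) : 0 < a -> a <= p < q -> q <= b ->
  (p = w0 \/ q = w0) -> (forall w, a <= w <= b -> G w <= G w0) ->
  (forall y, p <= y <= q -> G w0 - G y <= L * Rabs (y - w0)) ->
  (forall w, a <= w <= b -> K <= N w) -> 0 < K -> 0 < L -> 0 < del ->
  K / L * (ln (del + L * (q - p)) - ln del) <= travel a (G w0 + del) b.
Proof.
  intros Ha Hp Hq Hw0 Hmax Hslope HK HK0 HL Hdel.
  assert (Hadm : admissible a b (G w0 + del)) by (intros w Hw; specialize (Hmax w Hw); lra).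
  (* since w0 is an endpoint of [p, q], del + L |y - w0| is affine in y there *)
  assert (Haff : exists al be, al <> 0 /\
    (forall y, p <= y <= q -> al * y + be = del + L * Rabs (y - w0)) /\
    K * (ln (al * q + be) - ln (al * p + be)) / al = K / L * (ln (del + L * (q - p)) - ln del)).
  { destruct Hw0 as [<-|<-].
    - exists L, (del - L * p). split; [lra|split].
      + intros y Hy. rewrite Rabs_right by lra. ring.
      + replace (L * q + (del - L * p)) with (del + L * (q - p)) by ring.
        replace (L * p + (del - L * p)) with del by ring. field. lra.
    - exists (- L), (del + L * q). split; [lra|split].
      + intros y Hy. rewrite Rabs_left1 by lra. ring.
      + replace (- L * q + (del + L * q)) with del by ring.
        replace (- L * p + (del + L * q)) with (del + L * (q - p)) by ring. field. lra. }
  destruct Haff as [al [be [Hal [Hker Hval]]]].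
  assert (Hpos : forall y, Rmin p q <= y <= Rmax p q -> 0 < al * y + be).
  { intros y Hy. rewrite Rmin_left, Rmax_right in Hy by lra. rewrite Hker by lra.
    pose proof (Rabs_pos (y - w0)). nra. }
  pose proof (is_RInt_inv_affine K al be p q Hal Hpos) as Hint.
  rewrite <- Hval, <- (is_RInt_unique _ _ _ _ Hint).
  eapply Rle_trans; [|apply (travel_ge_RInt a b _ p q); auto; lra].
  apply RInt_le; [lra|eexists; exact Hint|apply (ex_RInt_dxdu a b); auto; lra|].
  intros y Hy. rewrite Hker by lra. specialize (HK y ltac:(lra)).
  specialize (Hslope y ltac:(lra)). specialize (Hmax y ltac:(lra)).
  pose proof (Rabs_pos (y - w0)). unfold dxdu, Rdiv.
  apply Rmult_le_compat; [lra|left; apply Rinv_0_lt_compat; nra|lra|].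
  apply Rinv_le_contravar; lra.
Qed.

Lemma travel_unbounded (a b w0 X : R) : 0 < a -> a < b -> a <= w0 <= b ->
  (forall w, a <= w <= b -> G w <= G w0) -> exists C, G w0 < C /\ X < travel a C b.
Proof.
  intros Ha Hab Hw0 Hmax.
  destruct (continuity_ab_min N a b) as [m [Hm Hmab]];
    [lra|intros; apply ex_derive_continuity_pt, N_derive; lra|].
  assert (HK : 0 < N m) by (apply N_pos; lra).
  destruct (root_lipschitz (fun y => G y - G w0) w0) as [L0 [d [Hd HL0]]]; [|ring|].
  { apply (ex_derive_minus (K := R_AbsRing) (V := R_NormedModule) G (fun _ => G w0));
      [apply G_derive; lra|apply (ex_derive_const (K := R_AbsRing) (V := R_NormedModule))]. }
  set (L := Rabs L0 + 1).
  assert (HL : 0 < L) by (unfold L; pose proof (Rabs_pos L0); lra).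
  assert (Hslope : forall y, Rabs (y - w0) < d -> G w0 - G y <= L * Rabs (y - w0)).
  { intros y Hy. specialize (HL0 y Hy). pose proof (Rabs_pos (y - w0)).
    pose proof (Rle_abs (G w0 - G y)). rewrite Rabs_minus_sym in HL0.
    pose proof (Rle_abs L0). unfold L. nra. }
  destruct (interval_ending_at a b w0 d Hab Hw0 Hd) as [p [q [Hp [Hq [Hend Hpqd]]]]].
  (* del is chosen so that ln (1 + L (q - p) / del) = ln (1 + E) exceeds X L / N m *)
  set (E := exp (X * L / N m)).
  assert (HE : 0 < E) by apply exp_pos.
  set (del := L * (q - p) / E).
  assert (Hdel : 0 < del) by (unfold del; apply Rdiv_lt_0_compat; nra).
  exists (G w0 + del). split; [lra|].
  eapply Rlt_le_trans; [|apply (travel_ge_log a b w0 p q (N m) L del); auto].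
  - replace (ln (del + L * (q - p)) - ln del) with (ln (1 + E)).
    + assert (Hlog : ln E < ln (1 + E)) by (apply ln_increasing; lra).
      unfold E in Hlog at 1. rewrite ln_exp in Hlog.
      replace X with (N m / L * (X * L / N m)) at 1 by (field; lra).
      apply Rmult_lt_compat_l; [apply Rdiv_lt_0_compat|]; lra.
    + assert (0 < L * (q - p)) by nra.
      rewrite <- ln_div by lra. f_equal. unfold del. field. split; lra.
  - intros y Hy. apply Hslope. destruct Hend as [<-|<-].
    + rewrite Rabs_right; lra.
    + rewrite Rabs_left1; lra.
Qed.

Lemma travel_solvable (a b len : R) : 0 < a -> a < b -> 0 < len ->
  exists C, admissible a b C /\ travel a C b = len.
Proof.
  intros Ha Hab Hlen.
  destruct (continuity_ab_maj G a b) as [w0 [Hmax Hw0]];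
    [lra|intros; apply G_continuity_pt; lra|].
  destruct (continuity_ab_maj N a b) as [m [HK Hm]];
    [lra|intros; apply ex_derive_continuity_pt, N_derive; lra|].
  assert (HK0 : 0 < N m) by (apply N_pos; lra).
  destruct (travel_unbounded a b w0 len Ha Hab Hw0 Hmax) as [C1 [HC1 HT1]].
  set (C2 := G w0 + 2 * (b - a) * N m / len).
  assert (HC2 : G w0 < C2).
  { unfold C2. assert (0 < 2 * (b - a) * N m / len) by (apply Rdiv_lt_0_compat; nra). lra. }
  assert (HT2 : travel a C2 b < len).
  { eapply Rle_lt_trans; [apply (travel_upper a b C2 (G w0) (N m)); auto; lra|].
    unfold C2. replace (G w0 + 2 * (b - a) * N m / len - G w0) with (2 * (b - a) * N m / len)
      by ring.
    replace ((b - a) * (N m / (2 * (b - a) * N m / len))) with (len / 2) by (field; nra). lra. }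
  assert (Hadm : forall C, G w0 < C -> admissible a b C)
    by (intros C HC w Hw; specialize (Hmax w Hw); lra).
  assert (H12 : C1 < C2).
  { destruct (Rlt_or_le C1 C2) as [|H]; [assumption|exfalso].
    destruct H as [H|<-]; [|lra].
    pose proof (travel_decr_C a b C2 C1 Ha Hab (Hadm C2 HC2) H). lra. }
  destruct (IVT_interv (fun C => len - travel a C b) C1 C2) as [C [HC HCeq]]; [| |lra|lra|].
  - intros C HC. apply continuity_pt_minus; [apply continuity_pt_const; intros ? ?; reflexivity|].
    apply (travel_continuity_C a b (G w0) (N m)); auto; lra.
  - exact H12.
  - exists C. split; [apply Hadm; lra|lra].
Qed.

Lemma travel_inj (a b C p q : R) : 0 < a -> admissible a b C ->
  a <= p <= b -> a <= q <= b -> travel a C p = travel a C q -> p = q.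
Proof.
  intros Ha Hadm Hp Hq E. destruct (Rtotal_order p q) as [H|[H|H]]; [exfalso| |exfalso]; auto.
  - pose proof (travel_strict_incr a b C p q Ha Hadm); lra.
  - pose proof (travel_strict_incr a b C q p Ha Hadm); lra.
Qed.

Lemma profile_strict_incr (l C : R) (u : R -> R) : 0 < l -> profile l C u -> u (-l) < u l ->
  (forall x, -l < x < l -> 0 < rhs C (u x)) /\
  (forall x y, -l <= x -> x < y -> y <= l -> u x < u y).
Proof.
  intros Hl Hu Hlt. pose proof Hu as [_ [Hc Hd]].
  destruct (profile_incr_or_const l C u Hu ltac:(lra)) as [Hconst|Hpos].
  - specialize (Hconst l ltac:(lra)). lra.
  - split; [exact Hpos|]. apply (strict_incr_of_derive u (fun t => rhs C (u t)) (-l) l); auto.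
Qed.

Lemma profile_admissible (l C a b : R) (u : R -> R) : 0 < l -> profile l C u ->
  u (-l) = a -> u l = b -> a < b -> admissible a b C.
Proof.
  intros Hl Hu Ha Hb Hab. pose proof Hu as [Hp [Hc Hd]].
  destruct (profile_strict_incr l C u Hl Hu ltac:(lra)) as [Hpos Hincr].
  assert (Ha0 : 0 < a) by (rewrite <- Ha; apply Hp; lra).
  assert (Hin : forall w, a < w < b -> G w < C).
  { intros w Hw.
    destruct (IVT_interv (fun t => u t - w) (-l) l) as [x [Hx Hux]]; [| |lra|lra|].
    - intros x _. apply continuity_pt_minus; [apply Hc|apply continuity_pt_const; now intros ? ?].
    - lra.
    - assert (x <> -l /\ x <> l) as [Hx1 Hx2] by (split; intros ->; lra).
      specialize (Hpos x ltac:(lra)). replace (u x) with w in Hpos by lra.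
      apply (rhs_pos C w); [lra|exact Hpos]. }
  (* at an endpoint G w = C would make u w an equilibrium of the ODE *)
  assert (Hend : forall x, (x = -l \/ x = l) -> G (u x) <> C).
  { intros x Hx Heq.
    assert (H0 : rhs C (u x) = 0) by (unfold rhs; rewrite Heq; unfold Rdiv; ring).
    pose proof (profile_const_of_root l C u x Hu ltac:(lra) H0 (-l) ltac:(lra)).
    pose proof (profile_const_of_root l C u x Hu ltac:(lra) H0 l ltac:(lra)). lra. }
  intros w Hw.
  destruct (Req_dec w a) as [->|Hwa]; [|destruct (Req_dec w b) as [->|Hwb]; [|apply Hin; lra]].
  - assert (Hle : G a <= C).
    { apply (closed_of_right (fun z => z <= C) G a (b - a));
        [apply closed_le|apply G_continuity_pt; lra|lra|intros; left; apply Hin; lra]. }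
    specialize (Hend (-l) (or_introl eq_refl)). rewrite Ha in Hend. lra.
  - assert (Hle : G b <= C).
    { apply (closed_of_left (fun z => z <= C) G b (b - a));
        [apply closed_le|apply G_continuity_pt; lra|lra|intros; left; apply Hin; lra]. }
    specialize (Hend l (or_intror eq_refl)). rewrite Hb in Hend. lra.
Qed.

Lemma profile_travel (l C a b : R) (u : R -> R) : 0 < l -> profile l C u ->
  u (-l) = a -> u l = b -> a < b ->
  forall x, -l <= x <= l -> a <= u x <= b /\ travel a C (u x) = x + l.
Proof.
  intros Hl Hu Ha Hb Hab. pose proof Hu as [Hp [Hc Hd]].
  destruct (profile_strict_incr l C u Hl Hu ltac:(lra)) as [Hpos Hincr].
  assert (Hadm := profile_admissible l C a b u Hl Hu Ha Hb Hab).
  assert (Ha0 : 0 < a) by (rewrite <- Ha; apply Hp; lra).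
  assert (Hrange : forall x, -l <= x <= l -> a <= u x <= b).
  { intros x Hx. rewrite <- Ha, <- Hb.
    split; [destruct (Req_dec x (-l)) as [->|]|destruct (Req_dec x l) as [->|]];
      try lra; left; apply Hincr; lra. }
  assert (Hphi : forall x, -l < x < l -> is_derive (fun t => travel a C (u t) - t) x 0).
  { intros x Hx. assert (Hux := Hrange x ltac:(lra)).
    replace 0 with (rhs C (u x) * dxdu C (u x) - 1)
      by (rewrite Rmult_comm, dxdu_rhs; [ring|lra|apply Hadm; lra]).
    apply (is_derive_minus (K := R_AbsRing) (V := R_NormedModule)
      (fun t => travel a C (u t)) (fun t => t)); [|apply (is_derive_id (K := R_AbsRing))].
    apply (is_derive_comp (travel a C) u); [apply (is_derive_travel a b)|apply Hd]; auto; lra. }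
  assert (Hcont : forall x, -l <= x <= l -> continuity_pt (fun t => travel a C (u t) - t) x).
  { intros x Hx. apply continuity_pt_minus; [|apply continuity_pt_id].
    apply (continuity_pt_comp u (travel a C)); [apply Hc|].
    exact (travel_continuity_pt a b C (u x) Ha0 ltac:(lra) Hadm (Hrange x Hx)). }
  intros x Hx. split; [now apply Hrange|].
  assert (E := const_of_derive_zero _ (-l) l Hphi Hcont x Hx). simpl in E.
  rewrite Ha, travel_base in E. lra.
Qed.

Lemma profile_unique_incr (l C1 C2 a b : R) (u1 u2 : R -> R) : 0 < l ->
  profile l C1 u1 -> profile l C2 u2 -> u1 (-l) = a -> u1 l = b -> u2 (-l) = a -> u2 l = b ->
  a < b -> forall x, -l <= x <= l -> u1 x = u2 x.
Proof.
  intros Hl Hu1 Hu2 Ha1 Hb1 Ha2 Hb2 Hab.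
  assert (Had1 := profile_admissible l C1 a b u1 Hl Hu1 Ha1 Hb1 Hab).
  assert (Had2 := profile_admissible l C2 a b u2 Hl Hu2 Ha2 Hb2 Hab).
  assert (HT1 := profile_travel l C1 a b u1 Hl Hu1 Ha1 Hb1 Hab).
  assert (HT2 := profile_travel l C2 a b u2 Hl Hu2 Ha2 Hb2 Hab).
  assert (Ha0 : 0 < a) by (rewrite <- Ha1; apply (proj1 Hu1); lra).
  (* the length 2 l = travel a C b determines C *)
  assert (E : C1 = C2).
  { destruct (HT1 l ltac:(lra)) as [_ E1]. destruct (HT2 l ltac:(lra)) as [_ E2].
    rewrite Hb1 in E1. rewrite Hb2 in E2.
    destruct (Rtotal_order C1 C2) as [H|[H|H]]; [exfalso| |exfalso]; auto.
    - pose proof (travel_decr_C a b C1 C2 Ha0 Hab Had1 H). lra.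
    - pose proof (travel_decr_C a b C2 C1 Ha0 Hab Had2 H). lra. }
  subst C2. intros x Hx.
  destruct (HT1 x Hx) as [Hr1 E1]. destruct (HT2 x Hx) as [Hr2 E2].
  apply (travel_inj a b C1); auto. lra.
Qed.

Definition position (a b C l w : R) : R := travel a C (clamp a b w) - l + (w - clamp a b w).

Lemma position_on (a b C l w : R) : a <= w <= b -> position a b C l w = travel a C w - l.
Proof. intros Hw. unfold position. rewrite clamp_id by exact Hw. ring. Qed.

Lemma position_strict_incr (a b C l w1 w2 : R) : 0 < a -> a < b -> admissible a b C ->
  w1 < w2 -> position a b C l w1 < position a b C l w2.
Proof.
  intros Ha Hab Hadm Hw. unfold position.
  destruct (clamp_mono a b w1 w2 ltac:(lra) ltac:(lra)) as [H1 H2].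
  pose proof (clamp_in a b w1 ltac:(lra)). pose proof (clamp_in a b w2 ltac:(lra)).
  destruct (Req_dec (clamp a b w1) (clamp a b w2)) as [E|Hne]; [rewrite E; lra|].
  pose proof (travel_strict_incr a b C (clamp a b w1) (clamp a b w2) Ha Hadm ltac:(lra)
    ltac:(lra) ltac:(lra)). lra.
Qed.

Lemma position_continuity_pt (a b C l w : R) : 0 < a -> a < b -> admissible a b C ->
  continuity_pt (position a b C l) w.
Proof.
  intros Ha Hab Hadm. unfold position.
  assert (Hcl := continuity_pt_clamp a b w ltac:(lra)).
  apply continuity_pt_plus; [apply continuity_pt_minus|apply continuity_pt_minus].
  - apply (continuity_pt_comp (clamp a b) (travel a C)); [exact Hcl|].
    apply (travel_continuity_pt a b); [lra|lra|exact Hadm|now apply clamp_in; lra].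
  - apply continuity_pt_const. now intros ? ?.
  - apply continuity_pt_id.
  - exact Hcl.
Qed.

Lemma position_surj (a b C l y : R) : 0 < a -> a < b -> 0 < l -> admissible a b C ->
  travel a C b = 2 * l -> exists w, position a b C l w = y.
Proof.
  intros Ha Hab Hl Hadm HT.
  set (w1 := a - Rabs y - 1). set (w2 := b + Rabs y + 1).
  assert (Hw1 : position a b C l w1 = - l - Rabs y - 1).
  { unfold position. rewrite clamp_below, travel_base by (unfold w1; pose proof (Rabs_pos y); lra).
    unfold w1. ring. }
  assert (Hw2 : position a b C l w2 = l + Rabs y + 1).
  { unfold position. rewrite clamp_above, HT by (unfold w2; pose proof (Rabs_pos y); lra).
    unfold w2. ring. }
  pose proof (Rle_abs y). pose proof (Rle_abs (- y)). rewrite Rabs_Ropp in *.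
  destruct (IVT_gen_consistent (position a b C l) w1 w2 y) as [w [_ Hw]].
  - intros x. apply continuity_pt_filterlim, position_continuity_pt; auto.
  - rewrite Hw1, Hw2, Rmin_left, Rmax_right; lra.
  - now exists w.
Qed.

Lemma is_derive_position (a b C l w : R) : 0 < a -> a < b -> admissible a b C -> a < w < b ->
  is_derive (position a b C l) w (dxdu C w).
Proof.
  intros Ha Hab Hadm Hw.
  apply (is_derive_ext_loc (fun w => travel a C w - l)).
  - apply (locally_interval _ w a b); simpl; [lra|lra|].
    intros y Hy1 Hy2. rewrite position_on; lra.
  - replace (dxdu C w) with (minus (dxdu C w) 0) by (unfold minus, plus, opp; simpl; ring).
    apply (is_derive_minus (K := R_AbsRing) (V := R_NormedModule) (travel a C) (fun _ => l));
      [apply (is_derive_travel a b); auto; lra|].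
    apply (is_derive_const (K := R_AbsRing) (V := R_NormedModule)).
Qed.

Lemma profile_exists_incr (l a b : R) : 0 < l -> 0 < a -> a < b ->
  exists C u, profile l C u /\ u (-l) = a /\ u l = b.
Proof.
  intros Hl Ha Hab.
  destruct (travel_solvable a b (2 * l) Ha Hab ltac:(lra)) as [C [Hadm HT]].
  set (f := position a b C l).
  destruct (increasing_inverse f) as [u [Hfu [Hincr Hc]]].
  - intros w. now apply position_continuity_pt.
  - intros w1 w2. now apply position_strict_incr.
  - intros y. now apply position_surj.
  assert (Hfa : f a = - l) by (unfold f; rewrite position_on, travel_base; lra).
  assert (Hfb : f b = l) by (unfold f; rewrite position_on, HT; lra).
  assert (Hinv : forall w, f (u (f w)) = f w -> u (f w) = w).
  { intros w E. destruct (Rtotal_order (u (f w)) w) as [H|[H|H]]; [exfalso| |exfalso]; auto;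
      apply (position_strict_incr a b C l) in H; auto; fold f in H; lra. }
  assert (Hua : u (- l) = a) by (rewrite <- Hfa; apply Hinv, Hfu).
  assert (Hub : u l = b) by (rewrite <- Hfb; apply Hinv, Hfu).
  assert (Hrange : forall x, -l < x < l -> a < u x < b).
  { intros x Hx. rewrite <- Hua, <- Hub. split; apply Hincr; lra. }
  exists C, u. split; [|split; assumption]. split; [|split; [exact Hc|]].
  - intros x Hx. destruct (Req_dec x (-l)) as [->|]; [lra|].
    destruct (Req_dec x l) as [->|]; [lra|]. specialize (Hrange x ltac:(lra)). lra.
  - intros x Hx. set (r := Rmin (x + l) (l - x) / 2).
    assert (Hr : 0 < r /\ -l < x - r /\ x + r < l).
    { pose proof (Rmin_l (x + l) (l - x)). pose proof (Rmin_r (x + l) (l - x)).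
      assert (0 < Rmin (x + l) (l - x)) by (apply Rmin_glb_lt; lra). unfold r; lra. }
    assert (Hux := Hrange x Hx).
    replace (rhs C (u x)) with (/ dxdu C (u x)).
    + apply (is_derive_inverse f u (dxdu C) x r); [lra|exact Hfu|apply Hc| | |].
      * split; left; apply Hincr; lra.
      * intros w Hw. pose proof (Hrange (x - r) ltac:(lra)). pose proof (Hrange (x + r) ltac:(lra)).
        apply is_derive_position; auto; lra.
      * apply Rgt_not_eq, dxdu_pos; [lra|apply Hadm; lra].
    + pose proof (dxdu_rhs C (u x) ltac:(lra) (Hadm (u x) ltac:(lra))).
      pose proof (dxdu_pos C (u x) ltac:(lra) (Hadm (u x) ltac:(lra))).
      apply (Rmult_eq_reg_l (dxdu C (u x))); [|lra]. rewrite Rinv_r; lra.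
Qed.

End Profile.

Lemma profile_reflect (G G' N : R -> R) (l C : R) (u : R -> R) : (forall w, G' w = - G w) ->
  profile G N l C u -> profile G' N l (- C) (fun t => u (- t)).
Proof.
  intros HG [Hp [Hc Hd]]. split; [|split].
  - intros x Hx. apply Hp. lra.
  - intros x. apply (continuity_pt_comp (fun t => - t) u); [reg|apply Hc].
  - intros x Hx. replace (rhs G' N (- C) (u (- x))) with (- rhs G N C (u (- x)))
      by (unfold rhs; rewrite HG; unfold Rdiv; ring).
    apply is_derive_reflect, Hd. lra.
Qed.

Section Boundary_value_problem.

Variables G N : R -> R.
Hypothesis G_derive : forall w, 0 < w -> ex_derive G w.
Hypothesis N_derive : forall w, 0 < w -> ex_derive N w.
Hypothesis N_pos : forall w, 0 < w -> 0 < N w.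

Let opp_G_derive (w : R) (Hw : 0 < w) : ex_derive (fun w => - G w) w :=
  ex_derive_Ropp G w (G_derive w Hw).

Lemma profile_exists (l a b : R) : 0 < l -> 0 < a -> 0 < b ->
  exists C u, profile G N l C u /\ u (-l) = a /\ u l = b.
Proof.
  intros Hl Ha Hb. destruct (Rtotal_order a b) as [Hab|[<-|Hba]].
  - now apply profile_exists_incr.
  - exists (G a), (fun _ => a). split; [|split; reflexivity]. split; [|split].
    + now intros.
    + intros x. apply continuity_pt_const. now intros ? ?.
    + intros x _. replace (rhs G N (G a) a) with 0 by (unfold rhs, Rdiv; ring).
      apply (is_derive_const (K := R_AbsRing) (V := R_NormedModule)).
  - destruct (profile_exists_incr (fun w => - G w) N opp_G_derive N_derive N_pos l b a Hl Hb Hba)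
      as [C [u [Hu [Hub Hua]]]].
    exists (- C), (fun t => u (- t)). rewrite Ropp_involutive. split; [|split; assumption].
    apply (profile_reflect (fun w => - G w)); [intros; ring|exact Hu].
Qed.

Lemma profile_unique (l a b C1 C2 : R) (u1 u2 : R -> R) : 0 < l ->
  profile G N l C1 u1 -> profile G N l C2 u2 ->
  u1 (-l) = a -> u1 l = b -> u2 (-l) = a -> u2 l = b ->
  forall x, -l <= x <= l -> u1 x = u2 x.
Proof.
  intros Hl Hu1 Hu2 Ha1 Hb1 Ha2 Hb2 x Hx. destruct (Rtotal_order a b) as [Hab|[<-|Hba]].
  - now apply (profile_unique_incr G N G_derive N_derive N_pos l C1 C2 a b).
  - rewrite (profile_flat G N G_derive N_derive N_pos l C1 u1 Hl Hu1 ltac:(congruence) x Hx).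
    rewrite (profile_flat G N G_derive N_derive N_pos l C2 u2 Hl Hu2 ltac:(congruence) x Hx).
    congruence.
  - replace x with (- - x) by ring.
    apply (profile_unique_incr (fun w => - G w) N opp_G_derive N_derive N_pos l (- C1) (- C2) b a
      (fun t => u1 (- t)) (fun t => u2 (- t))); try (rewrite ?Ropp_involutive; assumption); try lra;
      apply (profile_reflect G); auto.
Qed.

End Boundary_value_problem.

(** * Stationary solutions *)

Definition flux_G (vm : R) (P : R -> R) (w : R) : R := vm ^ 2 / w + P w.

Definition visc_N (eps vm : R) (nu : R -> R) (w : R) : R := eps * vm * nu w / w ^ 2.

Lemma ex_derive_flux_G (vm : R) (P : R -> R) (w : R) :
  (forall w, 0 < w -> ex_derive P w) -> 0 < w -> ex_derive (flux_G vm P) w.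
Proof. intros HP Hw. unfold flux_G. auto_derive. repeat split; [lra|now apply HP]. Qed.

Lemma ex_derive_visc_N (eps vm : R) (nu : R -> R) (w : R) :
  (forall w, 0 < w -> ex_derive nu w) -> 0 < w -> ex_derive (visc_N eps vm nu) w.
Proof.
  intros Hnu Hw. unfold visc_N. auto_derive. repeat split; [now apply Hnu|].
  apply Rgt_not_eq. nra.
Qed.

Lemma visc_N_pos (eps vm : R) (nu : R -> R) (w : R) : 0 < eps -> 0 < vm ->
  (forall w, 0 < w -> 0 < nu w) -> 0 < w -> 0 < visc_N eps vm nu w.
Proof.
  intros He Hv Hnu Hw. specialize (Hnu w Hw). unfold visc_N.
  apply Rdiv_lt_0_compat; [apply Rmult_lt_0_compat; [nra|lra]|apply pow_lt; lra].
Qed.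

Lemma flux_const_momentum (eps vm : R) (P nu u v : R -> R) (x Du : R) :
  0 < u x -> is_derive u x Du -> locally x (fun y => v y = vm) ->
  flux eps P nu u v x = flux_G vm P (u x) + visc_N eps vm nu (u x) * Du.
Proof.
  intros Hu HD Hloc. unfold flux, flux_G, visc_N. rewrite (locally_singleton _ _ Hloc).
  replace (Derive (fun y => v y / u y) x) with ((0 * u x - vm * Du) / u x ^ 2); [field; lra|].
  symmetry. apply is_derive_unique.
  apply (is_derive_ext_loc (fun y => vm / u y)).
  - revert Hloc. apply filter_imp. intros y ->. reflexivity.
  - apply (is_derive_div (fun _ => vm) u x 0 Du); [|exact HD|lra].
    apply (is_derive_const (K := R_AbsRing) (V := R_NormedModule)).
Qed.

Lemma stationary_momentum (l eps : R) (P nu : R -> R) (um up vm : R) (u v : R -> R) : 0 < l ->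
  stationary_solution l eps P nu um up vm u v -> forall x, -l <= x <= l -> v x = vm.
Proof.
  intros Hl [_ [Hc [Hd [_ [_ Hv]]]]] x Hx.
  set (ve := fun t => v (clamp (-l) l t)).
  assert (Hve : forall y, -l <= y <= l -> ve y = v y) by (intros; unfold ve; now rewrite clamp_id).
  rewrite <- Hv, <- (Hve x Hx), <- (Hve (-l)) by lra.
  apply (const_of_derive_zero ve (-l) l); [|intros; apply seg_continuous_clamp; [lra|]|exact Hx].
  - intros y Hy. apply (is_derive_ext_loc v).
    + apply (locally_interval _ y (-l) l); simpl; [lra|lra|]. intros z Hz1 Hz2. rewrite Hve; lra.
    + apply Hd. exact Hy.
  - intros z Hz. apply Hc, Hz.
Qed.

Lemma stationary_profile (l eps : R) (P nu : R -> R) (um up vm : R) (u v : R -> R) :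
  0 < l -> 0 < eps -> 0 < vm -> (forall w, 0 < w -> 0 < nu w) ->
  stationary_solution l eps P nu um up vm u v ->
  exists C, profile (flux_G vm P) (visc_N eps vm nu) l C (fun x => u (clamp (-l) l x)).
Proof.
  intros Hl He Hvm Hnu Hst.
  assert (Hv := stationary_momentum l eps P nu um up vm u v Hl Hst).
  destruct Hst as [Hp [Hc [Hd _]]].
  assert (Hloc : forall x, -l < x < l -> locally x (fun y => v y = vm)).
  { intros x Hx. apply (locally_interval _ x (-l) l); simpl; [lra|lra|]. intros; apply Hv; lra. }
  exists (flux eps P nu u v 0). split; [|split].
  - intros x Hx. apply Hp, clamp_in. lra.
  - intros x. apply seg_continuous_clamp; [lra|]. intros y Hy. apply Hc, Hy.
  - intros x Hx. rewrite clamp_id by lra.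
    assert (HDu : is_derive u x (Derive u x)) by apply Derive_correct, (Hd x Hx).
    set (Du := Derive u x) in *.
    apply (is_derive_ext_loc u).
    { apply (locally_interval _ x (-l) l); simpl; [lra|lra|]. intros; rewrite clamp_id; lra. }
    replace (rhs (flux_G vm P) (visc_N eps vm nu) (flux eps P nu u v 0) (u x)) with Du;
      [exact HDu|].
    assert (HN := visc_N_pos eps vm nu (u x) He Hvm Hnu (Hp x ltac:(lra))).
    assert (E : flux eps P nu u v x = flux eps P nu u v 0).
    { apply (open_const_of_derive_zero _ (-l) l); [|exact Hx|lra]. intros y Hy. apply Hd, Hy. }
    rewrite (flux_const_momentum eps vm P nu u v x Du (Hp x ltac:(lra)) HDu (Hloc x Hx)) in E.
    unfold rhs. rewrite <- E. field. lra.
Qed.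

Lemma profile_stationary (l eps : R) (P nu : R -> R) (um up vm C : R) (u : R -> R) :
  0 < eps -> 0 < vm -> (forall w, 0 < w -> ex_derive P w) ->
  (forall w, 0 < w -> ex_derive nu w) -> (forall w, 0 < w -> 0 < nu w) ->
  profile (flux_G vm P) (visc_N eps vm nu) l C u -> u (-l) = um -> u l = up ->
  stationary_solution l eps P nu um up vm u (fun _ => vm).
Proof.
  intros He Hvm HP Hnud Hnu [Hp [Hc Hd]] Hum Hup.
  set (G := flux_G vm P) in *. set (N := visc_N eps vm nu) in *.
  assert (HNp : forall w, 0 < w -> 0 < N w) by (intros; now apply visc_N_pos).
  assert (Hin : forall x, -l < x < l -> locally x (fun y => -l < y < l))
    by (intros x Hx; apply (locally_interval _ x (-l) l); simpl; [lra|lra|auto]).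
  split; [exact Hp|split; [|split; [|split; [exact Hum|split; [exact Hup|reflexivity]]]]].
  - intros x Hx. split; [|apply filterlim_const].
    exact (seg_continuous_of_continuity_pt l u (fun y _ => Hc y) x Hx).
  - intros x Hx. split; [|split; [|split]].
    + exists (rhs G N C (u x)). now apply Hd.
    + apply (ex_derive_ext_loc (fun y => rhs G N C (u y))).
      * apply (filter_imp (fun y => -l < y < l)); [|exact (Hin x Hx)]. intros y Hy.
        symmetry. now apply is_derive_unique, Hd.
      * apply (ex_derive_comp (K := R_AbsRing) (V := R_NormedModule) (rhs G N C) u x).
        -- apply ex_derive_rhs; auto; [intros; now apply ex_derive_flux_G|
             intros; now apply ex_derive_visc_N|apply Hp; lra].
        -- exists (rhs G N C (u x)). now apply Hd.
    + apply (is_derive_const (K := R_AbsRing) (V := R_NormedModule)).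
    + apply (is_derive_ext_loc (fun _ => C));
        [|apply (is_derive_const (K := R_AbsRing) (V := R_NormedModule))].
      apply (filter_imp (fun y => -l < y < l)); [|exact (Hin x Hx)]. intros y Hy.
      assert (Huy : 0 < u y) by (apply Hp; lra).
      rewrite (flux_const_momentum eps vm P nu u (fun _ => vm) y (rhs G N C (u y)) Huy (Hd y Hy)
        (filter_forall _ (fun _ => eq_refl))).
      symmetry. now apply rhs_balance.
Qed.

Theorem theorem1p2 (l eps vm um up : R) (P nu : R -> R)
  (hl : 0 < l) (heps : 0 < eps) (hvm : 0 < vm) (hum : 0 < um) (hup : 0 < up)
  (* P in C^2(R^+) *)
  (hP0 : P 0 = 0)
  (hPc0 : filterlim P (at_right 0) (locally 0))
  (hPd : forall u, 0 < u -> ex_derive P u)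
  (hPdd : forall u, 0 < u -> ex_derive (Derive P) u)
  (hPc2 : forall u, 0 < u -> continuous (Derive_n P 2) u)
  (hPinf : is_lim P p_infty p_infty)
  (hP1 : forall u, 0 < u -> 0 < Derive P u)
  (hP2 : forall u, 0 < u -> 0 < Derive_n P 2 u)
  (* nu in C^1(R^+), nu > 0 *)
  (hnud : forall u, 0 < u -> ex_derive nu u)
  (hnuc : forall u, 0 < u -> continuous (Derive nu) u)
  (hnu : forall u, 0 < u -> 0 < nu u)
  (* Rankine-Hugoniot and entropy conditions, v_* := v_- *)
  (hRH : vm ^ 2 * (up - um) = um * up * (P up - P um))
  (hent : (vm ^ 3 / (2 * up ^ 2) + vm * fprime P up)
          - (vm ^ 3 / (2 * um ^ 2) + vm * fprime P um) <= 0) :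
  exists u v : R -> R,
    stationary_solution l eps P nu um up vm u v /\
    forall u' v' : R -> R,
      stationary_solution l eps P nu um up vm u' v' ->
      forall x, -l <= x <= l -> u' x = u x /\ v' x = v x.
Proof.
  assert (hG : forall w, 0 < w -> ex_derive (flux_G vm P) w)
    by (intros; now apply ex_derive_flux_G).
  assert (hN : forall w, 0 < w -> ex_derive (visc_N eps vm nu) w)
    by (intros; now apply ex_derive_visc_N).
  assert (hNp : forall w, 0 < w -> 0 < visc_N eps vm nu w) by (intros; now apply visc_N_pos).
  destruct (profile_exists _ _ hG hN hNp l um up hl hum hup) as [C [u [Hu [Hum Hup]]]].
  exists u, (fun _ => vm). split; [now apply (profile_stationary l eps P nu um up vm C u)|].
  intros u' v' Hst x Hx. split; [|now apply (stationary_momentum l eps P nu um up vm u' v')].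
  destruct (stationary_profile l eps P nu um up vm u' v' hl heps hvm hnu Hst) as [C' Hu'].
  destruct Hst as [_ [_ [_ [Hum' [Hup' _]]]]].
  transitivity (u' (clamp (-l) l x)); [now rewrite clamp_id|].
  apply (profile_unique _ _ hG hN hNp l um up C' C (fun y => u' (clamp (-l) l y)) u hl Hu' Hu);
    [rewrite clamp_id; lra..|assumption|assumption|exact Hx].
Qed.
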